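(* Let $(\mu_n)_{n\ge0}$ be complex numbers with $\mu_0=1$, let $M(z)=\sum_{n\ge0}\mu_nz^n$, let $(h_n)_{n\ge1}$ be its boolean cumulants and $(c_n)_{n\ge1}$ its free cumulants. Then for every $n\ge 2$, $$c_n=\sum_{r=1}^{n-1}\ \sum_{\substack{i_1+\dots+i_r=n\\ i_j\ge1}}\frac{(-1)^{r-1}}{n-1}\binom{n-1}{r}\,h_{i_1}h_{i_2}\cdots h_{i_r},$$ where the inner sum is over ordered tuples $(i_1,\dots,i_r)$ of positive integers summing to $n$. *)

From HB Require Import structures.
From mathcomp Require Import all_boot all_order all_algebra.
From mathcomp Require Import complex reals.
Set Implicit Arguments. Unset Strict Implicit. Unset Printing Implicit Defensive.
Import Order.TTheory GRing.Theory Num.Theory.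
Local Open Scope ring_scope.

(* Sum over ordered k-tuples (j_1,...,j_k) of nonnegative integers with
   j_1+...+j_k = m of the product a_{j_1} ... a_{j_k};
   this is the coefficient of z^m in A(z)^k for A(z) = sum_j a_j z^j. *)
Definition tuple_prod_sum (F : fieldType) (a : nat -> F) (k m : nat) : F :=
  \sum_(t : {ffun 'I_k -> 'I_m.+1} | (\sum_(j < k) (t j : nat))%N == m)
     \prod_(j < k) a (t j : nat).

Definition composition_prod_sum (F : fieldType) (a : nat -> F) (k m : nat) : F :=
  \sum_(t : {ffun 'I_k -> 'I_m.+1} |
          [forall j, (0 < (t j : nat))%N] && ((\sum_(j < k) (t j : nat))%N == m))
     \prod_(j < k) a (t j : nat).

(* h is the sequence of boolean cumulants of the moment sequence mu
   (with mu 0 = 1): M(z) = 1/(1 - H(z)), H(z) = sum_{n>=1} h_n z^n,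
   i.e. M = 1 + H M, i.e. mu_n = sum_{k=1}^n h_k mu_{n-k} for n >= 1. *)
Definition is_boolean_cumulants (F : fieldType) (mu h : nat -> F) : Prop :=
  forall n, (0 < n)%N -> mu n = \sum_(1 <= k < n.+1) h k * mu (n - k)%N.

(* c is the sequence of free cumulants of mu: M(z) = C(z M(z)) with
   C(z) = 1 + sum_{k>=1} c_k z^k, i.e. for n >= 1
   mu_n = sum_{k=1}^n c_k [z^{n-k}] M(z)^k
        = sum_{k=1}^n c_k sum_{j_1+..+j_k = n-k} mu_{j_1}...mu_{j_k}
   (the standard moment-free cumulant recursion, equivalent to the
   noncrossing-partition formula). *)
Definition is_free_cumulants (F : fieldType) (mu c : nat -> F) : Prop :=
  forall n, (0 < n)%N ->
    mu n = \sum_(1 <= k < n.+1) c k * tuple_prod_sum mu k (n - k)%N.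

From HB Require Import structures.
From mathcomp Require Import all_boot all_order all_algebra.
From mathcomp Require Import complex reals.
From mathcomp Require Import zify ring.
Import Order.TTheory GRing.Theory Num.Theory.
Set Implicit Arguments. Unset Strict Implicit. Unset Printing Implicit Defensive.
Local Open Scope ring_scope.

(* Lagrange inversion, done on truncated power series.  Put
   psi = 1 - H = 1/M and w = z M, so that M = C(w) and z = w psi.
   Differentiating M = 1 + sum_k c_k w^k and taking the coefficient of
   z^(n-1) in M' psi^n isolates n c_n, because [z^(n-1)] (w^k)' psi^n
   vanishes for k < n and equals n for k = n.  On the other side
   M' psi^n = -psi' psi^(n-2) = -(psi^(n-1))' / (n-1), whence
   c_n = -[z^n] (1 - H)^(n-1) / (n-1), and the binomial expansion of
   (1 - H)^(n-1) gives the formula. *)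

Section EqUpto.
Variable R : comNzRingType.
Implicit Types P Q S : {poly R}.

Definition eq_upto d P Q := forall i, (i <= d)%N -> P`_i = Q`_i.

Lemma eq_upto_trans d P Q S : eq_upto d P Q -> eq_upto d Q S -> eq_upto d P S.
Proof. by move=> PQ QS i le_id; rewrite PQ // QS. Qed.

Lemma eq_upto_le d e P Q : (e <= d)%N -> eq_upto d P Q -> eq_upto e P Q.
Proof. by move=> le_ed PQ i le_ie; apply: PQ; apply: leq_trans le_ed. Qed.

Lemma eq_upto_mulr d P Q S : eq_upto d P Q -> eq_upto d (P * S) (Q * S).
Proof.
move=> PQ i le_id; rewrite !coefM; apply: eq_bigr => j _; rewrite PQ //.
by apply: leq_trans le_id; rewrite -ltnS.
Qed.

Lemma eq_upto_mull d P Q S : eq_upto d P Q -> eq_upto d (S * P) (S * Q).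
Proof. by rewrite ![S * _]mulrC; apply: eq_upto_mulr. Qed.

Lemma eq_upto_mul d P Q P' Q' :
  eq_upto d P Q -> eq_upto d P' Q' -> eq_upto d (P * P') (Q * Q').
Proof.
by move=> PQ PQ'; apply: eq_upto_trans (eq_upto_mulr _ PQ) (eq_upto_mull _ PQ').
Qed.

Lemma eq_upto_exp d P Q k : eq_upto d P Q -> eq_upto d (P ^+ k) (Q ^+ k).
Proof. by move=> PQ; elim: k => [|k IHk] //; rewrite !exprS; apply: eq_upto_mul. Qed.

Lemma eq_upto_deriv d P Q : eq_upto d.+1 P Q -> eq_upto d P^`() Q^`().
Proof. by move=> PQ i le_id; rewrite !coef_deriv PQ. Qed.

Lemma eq_upto_inv_exp d M psi k l : eq_upto d (M * psi) 1 ->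
  eq_upto d (M ^+ k * psi ^+ (k + l)) (psi ^+ l).
Proof.
move=> Mpsi; rewrite exprD mulrA -exprMn -[X in eq_upto _ _ X]mul1r.
by apply: eq_upto_mulr; rewrite -(expr1n _ k); apply: eq_upto_exp.
Qed.

Lemma deriv1 : (1 : {poly R})^`() = 0.
Proof. by rewrite -polyC1 derivC. Qed.

Lemma eq_upto_deriv_inv d M psi e : eq_upto d.+1 (M * psi) 1 ->
  eq_upto d (M^`() * psi ^+ e.+2) (- (psi^`() * psi ^+ e)).
Proof.
move=> Mpsi.
have dMpsi : eq_upto d (M^`() * psi) (- (M * psi^`())).
  move=> i le_id; have := eq_upto_deriv Mpsi le_id.
  by rewrite derivM deriv1 coef0 coefD coefN => /eqP; rewrite addr_eq0 => /eqP.
rewrite exprS mulrA; apply: eq_upto_trans (eq_upto_mulr _ dMpsi) _.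
have -> : - (M * psi^`()) * psi ^+ e.+1 = - (psi^`() * psi ^+ e) * (M * psi).
  by rewrite exprS; ring.
by rewrite -[X in eq_upto _ _ X]mulr1; apply/eq_upto_mull/(eq_upto_le _ Mpsi).
Qed.

Lemma coef_deriv_exp_mul (p : {poly R}) e i :
  (p^`() * p ^+ e)`_i *+ e.+1 = (p ^+ e.+1)`_i.+1 *+ i.+1.
Proof. by rewrite -coefMn -coef_deriv deriv_exp. Qed.

Lemma coef_deriv_expXM_diag M psi n : eq_upto n.+1 (M * psi) 1 ->
  ((('X * M) ^+ n.+1)^`() * psi ^+ n.+1)`_n = n.+1%:R.
Proof.
move=> Mpsi; rewrite -[LHS](addrK (('X * M) ^+ n.+1 * (psi ^+ n.+1)^`())`_n).
rewrite -coefD -derivM coef_deriv !exprMn -!mulrA !coefXnM ltnn ltnSn subnn.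
have := eq_upto_inv_exp n.+1 0 Mpsi (leq0n _); rewrite addn0 => ->.
by rewrite coef1 subr0.
Qed.

Lemma coef_exp1B (p : {poly R}) e i :
  ((1 - p) ^+ e)`_i = \sum_(r < e.+1) (-1) ^+ r * (p ^+ r)`_i *+ 'C(e, r).
Proof.
rewrite exprBn coef_sum; apply: eq_bigr => r _.
by rewrite expr1n mulr1 coefMn -(rmorphN1 polyC) -rmorphXn mul_polyC coefZ.
Qed.

End EqUpto.

Section CompositionSums.
Variable F : fieldType.

Lemma coefX_tuple_prod_sum (a : nat -> F) (P : {poly F}) k m :
  (forall j, (j <= m)%N -> P`_j = a j) -> (P ^+ k)`_m = tuple_prod_sum a k m.
Proof.
move=> Pa; pose Q : {poly F} := \sum_(i < m.+1) a i *: 'X^i.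
have PQ : eq_upto m P Q by move=> j le_jm; rewrite /Q -poly_def coef_poly ltnS le_jm Pa.
rewrite (eq_upto_exp k PQ) //.
have -> : Q ^+ k = \prod_(j < k) Q by rewrite prodr_const card_ord.
rewrite bigA_distr_bigA coef_sum /tuple_prod_sum [RHS]big_mkcond /=.
apply: eq_bigr => t _.
have -> : \prod_(j < k) (a (t j) *: 'X^(t j)) =
    (\prod_(j < k) a (t j))%:P * 'X^(\sum_(j < k) (t j : nat)).
  by rewrite -prodrXr rmorph_prod -big_split /=; apply: eq_bigr => j _; rewrite mul_polyC.
by rewrite coefCM coefXn eq_sym; case: eqP; rewrite ?mulr1 ?mulr0.
Qed.

Definition nonconst (a : nat -> F) (j : nat) : F := if j == 0%N then 0 else a j.

Lemma composition_prod_sumE (a : nat -> F) k m :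
  composition_prod_sum a k m = tuple_prod_sum (nonconst a) k m.
Proof.
rewrite /composition_prod_sum /tuple_prod_sum [RHS]big_mkcond [LHS]big_mkcond.
apply: eq_bigr => t _; case: (boolP [forall j, _]) => [t_gt0 | /forallPn[j]] /=.
  by case: eqP => // _; apply: eq_bigr => j _; rewrite /nonconst eqn0Ngt (forallP t_gt0 j).
rewrite -eqn0Ngt => /eqP tj0; case: eqP => // _.
by rewrite (bigD1 j) //= /nonconst tj0 mul0r.
Qed.

End CompositionSums.

Section LagrangeInversion.
Variable F : fieldType.
Hypothesis charF0 : has_pchar0 F.

Lemma natrS_neq0 n : n.+1%:R != 0 :> F.
Proof. by rewrite ((pcharf0P F).1 charF0). Qed.

Lemma coef_deriv_exp_mul_diag (p : {poly F}) e :
  (p^`() * p ^+ e)`_e = (p ^+ e.+1)`_e.+1.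
Proof. by apply: (mulIf (natrS_neq0 e)); rewrite !mulr_natr coef_deriv_exp_mul. Qed.

Lemma coef_deriv_expXM_lt (M psi : {poly F}) k e :
  eq_upto (k + e.+1) (M * psi) 1 ->
  ((('X * M) ^+ k)^`() * psi ^+ (k + e.+1))`_(k + e) = 0.
Proof.
move=> Mpsi; rewrite -[LHS](addrK (('X * M) ^+ k * (psi ^+ (k + e.+1))^`())`_(k + e)).
rewrite -coefD -derivM coef_deriv deriv_exp !exprMn -!mulrA !coefXnM.
have [-> ->] : ((k + e).+1 < k)%N = false /\ (k + e < k)%N = false by lia.
rewrite -addnS !addKn [in X in X.-1]addnS /=.
rewrite (eq_upto_inv_exp k e.+1 Mpsi (leq_addl _ _)).
rewrite mulrnAr mulrCA coefMn.
have Mpsi' : eq_upto (k + e) (M ^+ k * psi ^+ (k + e)) (psi ^+ e).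
  by apply: eq_upto_inv_exp; apply: eq_upto_le Mpsi; rewrite addnS.
rewrite (eq_upto_mull psi^`() Mpsi' (leq_addl _ _)) coef_deriv_exp_mul_diag.
by rewrite subrr.
Qed.

Lemma lagrange_inversion_coef (c : nat -> F) (M psi : {poly F}) n :
  eq_upto n.+1 (M * psi) 1 ->
  eq_upto n.+1 M (1 + \sum_(1 <= k < n.+2) c k *: ('X * M) ^+ k) ->
  (M^`() * psi ^+ n.+1)`_n = c n.+1 * n.+1%:R.
Proof.
move=> Mpsi MC; rewrite (eq_upto_mulr _ (eq_upto_deriv MC) (leqnn _)).
rewrite derivD deriv1 add0r raddf_sum /= mulr_suml coef_sum.
under eq_bigr do rewrite derivZ -scalerAl coefZ.
rewrite big_nat_recr //= coef_deriv_expXM_diag // big_nat big1 ?add0r //.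
move=> k /andP[_ lt_kn]; have n_eq : n = (k + (n - k))%N by lia.
by rewrite n_eq -addnS in Mpsi *; rewrite coef_deriv_expXM_lt ?mulr0.
Qed.

End LagrangeInversion.

Section Cumulants.
Variable F : fieldType.
Variables mu h c : nat -> F.
Hypothesis mu0 : mu 0%N = 1.
Hypothesis mu_h : is_boolean_cumulants mu h.
Hypothesis mu_c : is_free_cumulants mu c.

Local Notation M d := (\poly_(j < d.+1) mu j).
Local Notation H d := (\poly_(j < d.+1) nonconst h j).

Lemma moment_series_boolean d : eq_upto d (M d * (1 - H d)) 1.
Proof.
move=> [_|i le_id]; rewrite mulrBr mulr1 coefB coef1 mulrC coefM coef_poly ltnS.
  by rewrite big_ord1 !coef_poly /nonconst /= mul0r subr0 mu0.
rewrite le_id (mu_h (ltn0Sn i)) big_add1 /= big_mkord.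
rewrite [X in _ - X]big_ord_recl !coef_poly /nonconst /= mul0r add0r.
rewrite [X in _ - X](eq_bigr (fun k : 'I_i.+1 => h k.+1 * mu (i.+1 - k.+1))) ?subrr // => k _.
have := ltn_ord k; rewrite !coef_poly /bump /= add1n => lt_ki.
by rewrite !ifT //; lia.
Qed.

Lemma moment_series_free d :
  eq_upto d (M d) (1 + \sum_(1 <= k < d.+1) c k *: ('X * M d) ^+ k).
Proof.
move=> [_|i le_id]; rewrite coef_poly ltnS ?le_id coefD coef1 coef_sum.
  rewrite mu0 big_nat big1 ?addr0 // => k /andP[k_gt0 _].
  by rewrite coefZ exprMn coefXnM k_gt0 mulr0.
rewrite add0r (mu_c (ltn0Sn i)) [RHS](@big_cat_nat _ _ _ i.+2) //=.
rewrite [X in _ = _ + X]big_nat [X in _ = _ + X]big1 ?addr0; last first.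
  by move=> k /andP[lt_ik _]; rewrite coefZ exprMn coefXnM lt_ik mulr0.
apply: eq_big_nat => k /andP[_ le_ki]; rewrite coefZ exprMn coefXnM ltnNge -ltnS le_ki /=.
congr (_ * _); symmetry; apply: coefX_tuple_prod_sum => j le_j.
by rewrite coef_poly ifT //; lia.
Qed.

Lemma coefX_boolean_series d r : (H d ^+ r)`_d = composition_prod_sum h r d.
Proof.
rewrite composition_prod_sumE; apply: coefX_tuple_prod_sum => j le_jd.
by rewrite coef_poly ltnS le_jd.
Qed.

Hypothesis charF0 : has_pchar0 F.

Lemma free_cumulant_coef n : c n.+2 = - ((1 - H n.+2) ^+ n.+1)`_n.+2 / n.+1%:R.
Proof.
have Mpsi := @moment_series_boolean n.+2.
have := lagrange_inversion_coef charF0 Mpsi (@moment_series_free n.+2).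
rewrite (eq_upto_deriv_inv n Mpsi (leqnn _)) coefN => cE.
apply: (mulIf (natrS_neq0 charF0 n.+1)); rewrite -cE.
apply: (mulIf (natrS_neq0 charF0 n)); rewrite mulNr mulr_natr coef_deriv_exp_mul.
by rewrite mulrAC divfK ?natrS_neq0 // mulNr mulr_natr.
Qed.

End Cumulants.

Theorem mainTheorem2 (R : realType) (mu h c : nat -> R[i])
  (hmu0 : mu 0%N = 1)
  (hh : is_boolean_cumulants mu h)
  (hc : is_free_cumulants mu c) :
  forall n : nat, (2 <= n)%N ->
    c n = \sum_(1 <= r < n)
            ((-1) ^+ (r - 1) / (n - 1)%:R * ('C(n - 1, r))%:R)
              * composition_prod_sum h r n.
Proof.
move=> [|[|n]] // _.
rewrite (free_cumulant_coef hmu0 hh hc (pchar_num _)) coef_exp1B big_ord_recl.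
rewrite expr0 coef1 mulr0 mul0rn add0r -sumrN mulr_suml big_add1 big_mkord /=.
apply: eq_bigr => r _; rewrite coefX_boolean_series /bump /= add1n !subn1 /=.
rewrite exprS mulN1r mulNr mulNrn opprK -[_ *+ 'C(_, _)]mulr_natr.
by rewrite mulrAC [X in X * _ = _]mulrAC [RHS]mulrAC.
Qed.
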